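(* Fix a constant $\epsilon>0$. There exists a constant $A>0$ (depending only on $\epsilon$) such that for all integers $1 \le k \le d$, the Local Search algorithm with parameter $\epsilon$ (defined in the context), viewed as a map $c$ sending each finite point set $P\subset\mathbb{R}^d$ to its output $c(P)$, is an $(Ak)^{2k}$-composable core-set of size $k$ for the determinant maximization problem with parameter $k$. That is, $|c(P)|\le k$ for every $P$, and for every integer $m\ge1$ and all finite point sets $P_1,\dots,P_m\subset\mathbb{R}^d$, $$\mathrm{MAXDET}_k\Big(\bigcup_{i=1}^m c(P_i)\Big)\ge \frac{1}{(Ak)^{2k}}\,\mathrm{MAXDET}_k\Big(\bigcup_{i=1}^m P_i\Big).$$
   Context: For a finite set $S\subset\mathbb{R}^d$ with $|S|=j$, $\mathrm{VOL}(S)$ denotes the $j$-dimensional volume of the parallelepiped spanned by the vectors of $S$; if $M_S$ is the $j\times d$ matrix whose rows are the points of $S$, then $\det(M_SM_S^\top)=\mathrm{VOL}(S)^2$. For finite $P\subset\mathbb{R}^d$, $\mathrm{MAXDET}_k(P)=\max_{S\subseteq P,\,|S|=k}\det(M_SM_S^\top)$. For a set $\mathcal{C}$ and points $p,q$, $\mathcal{C}+q-p$ denotes $(\mathcal{C}\setminus\{p\})\cup\{q\}$. The Local Search algorithm on input $P$, $k$, $\epsilon$: initialize $\mathcal{C}=\emptyset$; for $i=1,\dots,k$ add to $\mathcal{C}$ a point $\arg\max_{p\in P\setminus\mathcal{C}}\mathrm{VOL}(\mathcal{C}\cup\{p\})$; then repeat: if there are $q\in P\setminus\mathcal{C}$ and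 $p\in\mathcal{C}$ with $\mathrm{VOL}(\mathcal{C}+q-p)\ge(1+\epsilon)\mathrm{VOL}(\mathcal{C})$, replace $p$ by $q$; until no such pair exists; output $\mathcal{C}$. A map $c$ from point sets to subsets of themselves is an $\alpha$-composable core-set for determinant maximization if the displayed inequality (with $\alpha$ in place of $(Ak)^{2k}$) holds for every collection $P_1,\dots,P_m$; it has size $t$ if $|c(P)|\le t$ for all $P$. *)

From HB Require Import structures.
From mathcomp Require Import all_boot all_order all_algebra.
From mathcomp Require Import finmap.
From mathcomp Require Import reals.
Set Implicit Arguments. Unset Strict Implicit. Unset Printing Implicit Defensive.
Import Order.TTheory GRing.Theory Num.Theory.
Local Open Scope ring_scope.
Local Open Scope fset_scope.

Section Defs.
Variables (R : realType) (d : nat).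
Notation pt := 'rV[R]_d.

(* M_S : the |S| x d matrix whose rows are the points of S (in some order;
   det (M_S M_S^T) does not depend on the order). *)
Definition mat_of (S : {fset pt}) : 'M[R]_(size (enum_fset S), d) :=
  \matrix_(i < size (enum_fset S), j < d) (nth 0 (enum_fset S) i) 0 j.

Definition gramdet (S : {fset pt}) : R :=
  \det (mat_of S *m (mat_of S)^T).

Definition VOL (S : {fset pt}) : R := Num.sqrt (gramdet S).

(* MAXDET_k(P) = max over k-subsets S of P of det(M_S M_S^T)
   (0 if P has fewer than k points; all Gram determinants are >= 0). *)
Definition MAXDET (k : nat) (P : {fset pt}) : R :=
  \big[Num.max/0]_(S <- fpowerset P | #|` S| == k) gramdet S.

Definition swap (C : {fset pt}) (q p : pt) : {fset pt} := q |` (C `\ p).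

Definition greedy_step (P C C' : {fset pt}) : Prop :=
  (exists2 p, p \in P `\` C &
     C' = p |` C /\ forall q, q \in P `\` C -> VOL (q |` C) <= VOL (p |` C))
  \/ (P `\` C = fset0 /\ C' = C).

Fixpoint greedy_reach (P : {fset pt}) (n : nat) (C : {fset pt}) : Prop :=
  match n with
  | 0 => C = fset0
  | n'.+1 => exists C0, greedy_reach P n' C0 /\ greedy_step P C0 C
  end.

Definition swap_step (eps : R) (P C C' : {fset pt}) : Prop :=
  exists q p, [/\ q \in P `\` C, p \in C, C' = swap C q p &
                  VOL (swap C q p) >= (1 + eps) * VOL C].

Inductive swap_reach (eps : R) (P : {fset pt}) : {fset pt} -> {fset pt} -> Prop :=
  | swap_refl C : swap_reach eps P C C
  | swap_next C1 C2 C3 : swap_step eps P C1 C2 -> swap_reach eps P C2 C3 ->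
                         swap_reach eps P C1 C3.

(* C is a possible output of Local Search on input P, k, eps
   (for some resolution of ties in the argmax and in the choice of swaps). *)
Definition LS_output (eps : R) (k : nat) (P C : {fset pt}) : Prop :=
  exists2 C0, greedy_reach P k C0 &
    swap_reach eps P C0 C /\
    (forall q p, q \in P `\` C -> p \in C -> VOL (swap C q p) < (1 + eps) * VOL C).

End Defs.

(* The Gram determinant factors as [gram (x :: s) = gram s * dist2 (span s) x].
   An output [C] of Local Search that is not all of [P] is a nondegenerate
   [k]-set on which no swap gains more than [L = (1 + eps)^2].  Writing
   [q = r + \sum_j a_j c_j] with [r] orthogonal to [span C], comparing [C]
   with the swap of [q] for [c_j] gives [|r|^2 <= L h_j] and [a_j^2 <= L],
   where [h_j] is the height of [c_j] over the other points of [C].  Hence,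
   against any set [t] of fewer than [k] points, [q] can be traded for some
   [c_j] at a cost of at most [4 L k^2]: [dist2 (span t) q] is at most
   [2 |r|^2 + 2 k \sum_j a_j^2 |perp_t c_j|^2], and some [h_j] is at most
   [k^2 max_i |perp_t c_i|^2], because a nonzero combination of the [c_i] is
   orthogonal to [span t].  Trading, one at a time, the points of an optimal
   [k]-subset of the union of the [P_i] that lie outside the union of the
   [C_i] loses at most a factor [(4 (1 + eps)^2 k^2)^k = (2 (1 + eps) k)^(2k)]. *)

From HB Require Import structures.
From mathcomp Require Import all_boot all_order all_algebra.
From mathcomp Require Import finmap.
From mathcomp Require Import reals.
From mathcomp Require Import perm.
From mathcomp Require Import ring lra zify.
Set Implicit Arguments. Unset Strict Implicit. Unset Printing Implicit Defensive.
Import Order.TTheory GRing.Theory Num.Theory.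
Local Open Scope ring_scope.

Lemma exists_left_kernel (F : fieldType) m n (A : 'M[F]_(m, n)) :
  (n < m)%N -> exists2 v : 'rV[F]_m, v != 0 & v *m A = 0.
Proof.
move=> nm; have /rowV0Pn[v /sub_kermxP vA v0] : kermx A != 0.
  by rewrite -mxrank_eq0 mxrank_ker -lt0n subn_gt0 (leq_ltn_trans (rank_leq_col A) nm).
by exists v.
Qed.

Lemma exists_argmax (R : realFieldType) n (F : 'I_n -> R) :
  (0 < n)%N -> exists j, forall i, F i <= F j.
Proof.
move=> n0; case: (@arg_maxP _ R _ (Ordinal n0) predT F) => // j _ Fj.
by exists j => i; apply: Fj.
Qed.

Section EuclideanRows.
Variables (R : realFieldType) (d : nat).
Notation pt := 'rV[R]_d.
Implicit Types (u v w x y : pt).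

Definition dot u v : R := (u *m v^T) 0 0.
Definition nrm2 u : R := dot u u.

Lemma dotE u v : dot u v = \sum_j u 0 j * v 0 j.
Proof. by rewrite /dot mxE; apply: eq_bigr => j _; rewrite mxE. Qed.

Lemma dotC u v : dot u v = dot v u.
Proof. by rewrite !dotE; apply: eq_bigr => j _; rewrite mulrC. Qed.

Lemma dotDl u v w : dot (u + v) w = dot u w + dot v w.
Proof. by rewrite /dot mulmxDl mxE. Qed.

Lemma dotZl a u w : dot (a *: u) w = a * dot u w.
Proof. by rewrite /dot -scalemxAl mxE. Qed.

Lemma dotNl u w : dot (- u) w = - dot u w.
Proof. by rewrite -scaleN1r dotZl mulN1r. Qed.

Lemma dotDr u v w : dot w (u + v) = dot w u + dot w v.
Proof. by rewrite dotC dotDl !(dotC w). Qed.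

Lemma dotNr u w : dot w (- u) = - dot w u.
Proof. by rewrite dotC dotNl dotC. Qed.

Lemma dot0l w : dot 0 w = 0.
Proof. by rewrite /dot mul0mx mxE. Qed.

Lemma dot_suml I (r : seq I) (P : pred I) (F : I -> pt) w :
  dot (\sum_(i <- r | P i) F i) w = \sum_(i <- r | P i) dot (F i) w.
Proof. by elim/big_rec2: _ => [|i y1 y2 _ <-]; rewrite ?dot0l ?dotDl. Qed.

Lemma dot_sumr I (r : seq I) (P : pred I) (F : I -> pt) w :
  dot w (\sum_(i <- r | P i) F i) = \sum_(i <- r | P i) dot w (F i).
Proof. by rewrite dotC dot_suml; apply: eq_bigr => i _; rewrite dotC. Qed.

Lemma nrm2_ge0 u : 0 <= nrm2 u.
Proof. by rewrite /nrm2 dotE sumr_ge0 // => j _; rewrite -expr2 sqr_ge0. Qed.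

Lemma nrm2_eq0 u : (nrm2 u == 0) = (u == 0).
Proof.
apply/idP/eqP => [|->]; last by rewrite /nrm2 dot0l.
rewrite /nrm2 dotE psumr_eq0 => [/allP u0|j _]; last by rewrite -expr2 sqr_ge0.
apply/rowP => j; rewrite mxE; apply/eqP.
by rewrite -sqrf_eq0 expr2; apply: (u0 j); rewrite mem_index_enum.
Qed.

Lemma nrm2D u v : nrm2 (u + v) = nrm2 u + 2 * dot u v + nrm2 v.
Proof. by rewrite /nrm2 !dotDl !dotDr (dotC v u); ring. Qed.

Lemma nrm2Z a u : nrm2 (a *: u) = a ^+ 2 * nrm2 u.
Proof. by rewrite /nrm2 dotZl dotC dotZl mulrA expr2. Qed.

Lemma nrm2_orthD u v : dot u v = 0 -> nrm2 (u + v) = nrm2 u + nrm2 v.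
Proof. by move=> uv; rewrite nrm2D uv mulr0 addr0. Qed.

Lemma dot_le_nrm2 u v : 2 * dot u v <= nrm2 u + nrm2 v.
Proof.
have := nrm2_ge0 (u - v); rewrite nrm2D /nrm2 dotNr dotNl dotNr opprK; lra.
Qed.

Lemma nrm2D_le u v : nrm2 (u + v) <= 2 * nrm2 u + 2 * nrm2 v.
Proof. by rewrite nrm2D; have := dot_le_nrm2 u v; lra. Qed.

Lemma nrm2_sum_le n (v : 'I_n -> pt) :
  nrm2 (\sum_i v i) <= n%:R * \sum_i nrm2 (v i).
Proof.
have cross : 2 * \sum_i \sum_j dot (v i) (v j)
    <= \sum_i \sum_j (nrm2 (v i) + nrm2 (v j)).
  rewrite mulr_sumr; apply: ler_sum => i _; rewrite mulr_sumr.
  by apply: ler_sum => j _; apply: dot_le_nrm2.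
have diag : \sum_i \sum_j (nrm2 (v i) + nrm2 (v j))
    = 2 * (n%:R * \sum_i nrm2 (v i)).
  under eq_bigr do rewrite big_split /= sumr_const card_ord.
  by rewrite big_split /= sumr_const card_ord sumrMnl (mulr_natl _ n) mulr_natl mulr2n.
have -> : nrm2 (\sum_i v i) = \sum_i \sum_j dot (v i) (v j).
  by rewrite /nrm2 dot_suml; apply: eq_bigr => i _; rewrite dot_sumr.
lra.
Qed.

Lemma nrm2_sum_scale_le n (a : 'I_n -> R) (e : 'I_n -> pt) (alpha D : R) :
  (forall i, a i ^+ 2 <= alpha) -> (forall i, nrm2 (e i) <= D) ->
  nrm2 (\sum_i a i *: e i) <= n%:R ^+ 2 * (alpha * D).
Proof.
move=> a_le e_le; apply: le_trans (nrm2_sum_le _) _.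
rewrite expr2 -mulrA ler_wpM2l //.
have -> : n%:R * (alpha * D) = \sum_(i < n) (alpha * D).
  by rewrite sumr_const card_ord mulr_natl.
apply: ler_sum => i _; rewrite nrm2Z.
by apply: ler_pM; rewrite ?sqr_ge0 ?nrm2_ge0.
Qed.

Section Projection.
Variables (n : nat) (B : 'M[R]_(n, d)).

Definition gram : R := \det (B *m B^T).
Definition coord x : 'rV[R]_n := x *m B^T *m invmx (B *m B^T).
Definition orthproj : 'M[R]_d := 1%:M - B^T *m invmx (B *m B^T) *m B.
Definition perp x : pt := x *m orthproj.
Definition dist2 x : R := nrm2 (perp x).

Lemma perp_coordE x : perp x + coord x *m B = x.
Proof. by rewrite /perp /orthproj /coord mulmxBr mulmx1 !mulmxA subrK. Qed.

Lemma sub_perp x : (x - perp x <= B)%MS.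
Proof. by rewrite -{1}(perp_coordE x) addrC addKr submxMl. Qed.

Lemma perp_id w : w *m B^T = 0 -> perp w = w.
Proof. by move=> wB; rewrite /perp /orthproj mulmxBr mulmx1 !mulmxA wB !mul0mx subr0. Qed.

Lemma perpD x y : perp (x + y) = perp x + perp y.
Proof. exact: mulmxDl. Qed.

Lemma perp_sum_rows m (u : 'rV[R]_m) (C : 'M[R]_(m, d)) :
  perp (u *m C) = \sum_i u 0 i *: perp (row i C).
Proof.
rewrite /perp -mulmxA mulmx_sum_row; apply: eq_bigr => i _.
by rewrite row_mul.
Qed.

Lemma dist2_ge0 x : 0 <= dist2 x.
Proof. exact: nrm2_ge0. Qed.

Lemma dist2Z a x : dist2 (a *: x) = a ^+ 2 * dist2 x.
Proof. by rewrite /dist2 /perp -scalemxAl nrm2Z. Qed.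

Hypothesis gram_neq0 : gram != 0.

Lemma perp_orth x : perp x *m B^T = 0.
Proof.
have BBt : B *m B^T \in unitmx by rewrite unitmxE unitfE.
rewrite /perp /orthproj mulmxBr mulmx1 mulmxBl -!mulmxA.
by rewrite mulVmx // mulmx1 subrr.
Qed.

Lemma dot_perp x y : (y <= B)%MS -> dot (perp x) y = 0.
Proof.
by case/submxP=> z ->; rewrite /dot trmx_mul mulmxA perp_orth mul0mx mxE.
Qed.

Lemma dist2_min x y : (y <= B)%MS -> dist2 x <= nrm2 (x - y).
Proof.
move=> yB; have -> : x - y = perp x + ((x - perp x) - y).
  by rewrite addrA (addrC (perp x)) subrK.
rewrite nrm2_orthD; first by rewrite lerDl nrm2_ge0.
by rewrite dot_perp // addmx_sub ?eqmx_opp ?sub_perp.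
Qed.

Lemma nrm2_perp_le x : nrm2 (perp x) <= nrm2 x.
Proof. by have := dist2_min x (sub0mx 1 B); rewrite subr0. Qed.

Lemma dist2_sub0 y : (y <= B)%MS -> dist2 y = 0.
Proof.
move=> yB; apply/eqP; rewrite eq_le dist2_ge0 andbT.
by have := dist2_min y yB; rewrite subrr /nrm2 dot0l.
Qed.

End Projection.

Lemma gram_col_mx n (B : 'M[R]_(n, d)) x :
  gram (col_mx x B) = gram B * dist2 B x.
Proof.
have [gB0|gB] := eqVneq (gram B) 0.
  rewrite gB0 mul0r; move: gB0 => /eqP/det0P[v v0 vBBt]; apply/eqP/det0P.
  have vB : v *m B = 0.
    apply/eqP; rewrite -nrm2_eq0 /nrm2 /dot trmx_mul mulmxA -(mulmxA v) vBBt.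
    by rewrite mul0mx mxE.
  exists (row_mx 0 v); first by rewrite -row_mx0; apply: contra v0 => /eqP/eq_row_mx[_ ->].
  by rewrite tr_col_mx mulmxA mul_row_col mul0mx add0r vB mul0mx.
set r := perp B x.
have -> : col_mx x B = block_mx 1%:M (coord B x) 0 1%:M *m col_mx r B.
  by rewrite mul_block_col !mul1mx mul0mx add0r perp_coordE.
have rB : r *m B^T = 0 by apply: perp_orth.
have Br : B *m r^T = 0 by rewrite -(trmxK B) -trmx_mul rB trmx0.
rewrite /gram trmx_mul !mulmxA -(mulmxA _ (col_mx r B)) !det_mulmx det_tr.
rewrite det_ublock !det1 !mul1r mulr1 tr_col_mx mul_col_row rB Br det_ublock.
by rewrite det_mx11 mulrC.
Qed.

Lemma gram_row_perm n (p : 'S_n) (B : 'M[R]_(n, d)) : gram (row_perm p B) = gram B.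
Proof.
rewrite /gram row_permE trmx_mul mulmxA -(mulmxA (perm_mx p)) !det_mulmx det_tr.
by rewrite det_perm mulrC mulrA -expr2 sqrr_sign mul1r.
Qed.

Definition seqmx (s : seq pt) : 'M[R]_(size s, d) :=
  \matrix_(i < size s, j < d) s`_i 0 j.
Definition gramseq s : R := gram (seqmx s).
Definition height s x : R := dist2 (seqmx (rem x s)) x.

Lemma row_seqmx s (i : 'I_(size s)) : row i (seqmx s) = s`_i.
Proof. by apply/rowP => j; rewrite !mxE. Qed.

Lemma seqmx_cons x s : seqmx (x :: s) = col_mx x (seqmx s).
Proof.
apply/matrixP => i j; rewrite !mxE; case: splitP => k ik.
  by rewrite (ord1 k) in ik *; rewrite ik.
by rewrite ik mxE.
Qed.

Lemma gramseq_cons x s : gramseq (x :: s) = gramseq s * dist2 (seqmx s) x.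
Proof. by rewrite /gramseq seqmx_cons gram_col_mx. Qed.

Lemma gramseq_ge0 s : 0 <= gramseq s.
Proof.
elim: s => [|x s IHs]; first by rewrite /gramseq /gram det_mx00.
by rewrite gramseq_cons mulr_ge0 ?dist2_ge0.
Qed.

Lemma gramseqE s n (B : 'M[R]_(n, d)) :
  size s = n -> (forall i : 'I_n, s`_i = row i B) -> gramseq s = gram B.
Proof.
move=> sz; subst n => sB; congr gram.
by apply/row_matrixP => i; rewrite row_seqmx sB.
Qed.

Lemma gramseq_perm s t : perm_eq s t -> gramseq s = gramseq t.
Proof.
move=> st; have /tuple_permP[p s_def] : perm_eq s (in_tuple t) by [].
rewrite [gramseq t]/gramseq -(gram_row_perm p).
apply: gramseqE => [|i]; first exact: perm_size.
have -> : row i (row_perm p (seqmx t)) = row (p i) (seqmx t).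
  by apply/rowP => j; rewrite !mxE.
by rewrite s_def nth_mktuple row_seqmx (tnth_nth 0).
Qed.

Lemma mem_seqmx s y : y \in s -> (y <= seqmx s)%MS.
Proof.
move=> ys; have si : (index y s < size s)%N by rewrite index_mem.
by apply: (eq_row_sub (Ordinal si)); rewrite row_seqmx nth_index.
Qed.

Lemma seqmx_subset s1 s2 : {subset s1 <= s2} -> (seqmx s1 <= seqmx s2)%MS.
Proof.
by move=> sub; apply/row_subP => i; rewrite row_seqmx mem_seqmx ?sub ?mem_nth.
Qed.

Lemma gramseq_rem s x : x \in s -> gramseq s = gramseq (rem x s) * height s x.
Proof. by move=> xs; rewrite -gramseq_cons; apply/gramseq_perm/perm_to_rem. Qed.

Lemma gramseq_cons_mem s x : x \in s -> gramseq (x :: s) = 0.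
Proof.
move=> xs; rewrite gramseq_cons; have [->|gs] := eqVneq (gramseq s) 0.
  by rewrite mul0r.
by rewrite dist2_sub0 ?mulr0 ?mem_seqmx.
Qed.

Lemma seqmx_rem_sub s (u : 'rV[R]_(size s)) (j : 'I_(size s)) : uniq s ->
  (u *m seqmx s - u 0 j *: s`_j <= seqmx (rem s`_j s))%MS.
Proof.
move=> s_uniq; rewrite mulmx_sum_row (bigD1 j) //= row_seqmx addrAC subrr add0r.
apply: summx_sub => i ij; rewrite scalemx_sub // row_seqmx mem_seqmx //.
rewrite rem_filter // mem_filter /= mem_nth // andbT nth_uniq //.
Qed.

Section LocalOptimum.
Variables (c : seq pt).
Hypotheses (c_uniq : uniq c) (gramseq_c_gt0 : 0 < gramseq c).
Notation n := (size c).
Notation B := (seqmx c).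

Lemma gramseq_rem_gt0 (j : 'I_n) :
  0 < gramseq (rem c`_j c) /\ 0 < height c c`_j.
Proof.
apply/andP; rewrite -mulr_ge0_gt0 ?gramseq_ge0 ?dist2_ge0 //.
by rewrite -gramseq_rem ?mem_nth.
Qed.

Lemma gram_rem_neq0 (j : 'I_n) : gram (seqmx (rem c`_j c)) != 0.
Proof. by case: (gramseq_rem_gt0 j) => /lt0r_neq0. Qed.

Lemma gram_seqmx_neq0 : gram B != 0.
Proof. exact: lt0r_neq0. Qed.

(* Pythagoras: [perp B q] is orthogonal to [span c], and of [coord B q *m B]
   only the component [coord B q 0 j *: c_j] survives projection away from
   [span (rem c_j c)]. *)
Lemma perp_coord_le_dist2_rem (q : pt) (j : 'I_n) :
  nrm2 (perp B q) + coord B q 0 j ^+ 2 * height c c`_j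
    <= dist2 (seqmx (rem c`_j c)) q.
Proof.
set S := seqmx (rem c`_j c); set a := coord B q.
have SB : (S <= B)%MS by apply: seqmx_subset => x; apply: mem_rem.
have yS : (q - perp S q <= S)%MS by apply: sub_perp.
set y := q - perp S q in yS *.
have -> : dist2 S q = nrm2 (perp B q + (a *m B - y)).
  by rewrite /dist2 /y opprB addrA perp_coordE addrC subrK.
rewrite nrm2_orthD; last first.
  by rewrite dot_perp ?gram_seqmx_neq0 // addmx_sub ?submxMl ?eqmx_opp ?(submx_trans yS).
rewrite lerD2l /height -/S -dist2Z.
have -> : a *m B - y = a 0 j *: c`_j - (y - (a *m B - a 0 j *: c`_j)).
  by rewrite [in RHS]opprB addrA [_ + (_ - _)]addrC subrK.
by apply: dist2_min; rewrite ?gram_rem_neq0 // addmx_sub ?eqmx_opp ?seqmx_rem_sub.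
Qed.

(* A nonzero combination [w] of the [c_i] is orthogonal to [span t], hence
   equal to the same combination of the residuals [perp t c_i]; [w] divided
   by its largest coefficient [lam_j] is [c_j] plus a vector of
   [span (rem c_j c)]. *)
Lemma exists_height_le (t : seq pt) (D : R) : (size t < n)%N ->
  (forall i : 'I_n, nrm2 (perp (seqmx t) c`_i) <= D) ->
  exists j : 'I_n, height c c`_j <= n%:R ^+ 2 * D.
Proof.
move=> tc perp_le.
have [lam lam0 lamBt] := exists_left_kernel (B *m (seqmx t)^T) tc.
set w := lam *m B.
have wBt : w *m (seqmx t)^T = 0 by rewrite /w -mulmxA.
have wE : w = \sum_i lam 0 i *: perp (seqmx t) c`_i.
  by rewrite -(perp_id wBt) perp_sum_rows; apply: eq_bigr => i _; rewrite row_seqmx.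
have [j0 lam_le] := exists_argmax (fun i => lam 0 i ^+ 2) (leq_ltn_trans (leq0n _) tc).
have lamj0 : 0 < lam 0 j0 ^+ 2.
  rewrite lt0r sqr_ge0 andbT sqrf_eq0; apply: contra lam0 => /eqP lamj0.
  apply/eqP/rowP => i; rewrite !mxE; apply/eqP; rewrite -sqrf_eq0 eq_le sqr_ge0 andbT.
  by have := lam_le i; rewrite /= lamj0 expr0n.
exists j0; rewrite -(ler_pM2l lamj0) mulrCA -/(height c c`_j0) -dist2Z.
have zS : (- (w - lam 0 j0 *: c`_j0) <= seqmx (rem c`_j0 c))%MS.
  by rewrite eqmx_opp seqmx_rem_sub.
apply: le_trans (dist2_min (gram_rem_neq0 j0) _ zS) _.
by rewrite opprK addrC subrK wE; apply: nrm2_sum_scale_le.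
Qed.

Section Swaps.
Variables (q : pt) (L : R).
Hypothesis swap_le : forall j : 'I_n, gramseq (q :: rem c`_j c) <= L * gramseq c.

Lemma dist2_rem_swap_le (j : 'I_n) : dist2 (seqmx (rem c`_j c)) q <= L * height c c`_j.
Proof.
have [rem_gt0 _] := gramseq_rem_gt0 j.
have := swap_le j; rewrite gramseq_cons (gramseq_rem (mem_nth 0 (ltn_ord j))).
by rewrite mulrCA ler_pM2l.
Qed.

Lemma nrm2_perp_swap_le (j : 'I_n) : nrm2 (perp B q) <= L * height c c`_j.
Proof.
apply: le_trans (dist2_rem_swap_le j); apply: le_trans (perp_coord_le_dist2_rem q j).
by rewrite lerDl mulr_ge0 ?sqr_ge0 ?dist2_ge0.
Qed.

Lemma coord_swap_le (j : 'I_n) : coord B q 0 j ^+ 2 <= L.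
Proof.
have [_ height_gt0] := gramseq_rem_gt0 j.
rewrite -(ler_pM2r height_gt0); apply: le_trans (dist2_rem_swap_le j).
by apply: le_trans (perp_coord_le_dist2_rem q j); rewrite lerDr nrm2_ge0.
Qed.

Lemma local_opt_exchange (t : seq pt) : 0 < gramseq t -> (size t < n)%N ->
  exists j : 'I_n, gramseq (q :: t) <= 4 * L * n%:R ^+ 2 * gramseq (c`_j :: t).
Proof.
move=> gram_t_gt0 tc; set Bt := seqmx t.
have gram_t : gram Bt != 0 by apply: lt0r_neq0.
have c_gt0 : (0 < n)%N := leq_ltn_trans (leq0n _) tc.
have [j1 perp_le] := exists_argmax (fun i => nrm2 (perp Bt c`_i)) c_gt0.
set D := nrm2 (perp Bt c`_j1) in perp_le.
have [j0 height_le] := exists_height_le tc perp_le.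
have L0 : 0 <= L by apply: le_trans (coord_swap_le j0); apply: sqr_ge0.
have perp_qE : perp Bt q = perp Bt (perp B q) + \sum_i coord B q 0 i *: perp Bt c`_i.
  rewrite -{1}(perp_coordE B q) perpD perp_sum_rows.
  by congr (_ + _); apply: eq_bigr => i _; rewrite row_seqmx.
have r_le : nrm2 (perp Bt (perp B q)) <= L * (n%:R ^+ 2 * D).
  apply: le_trans (nrm2_perp_le gram_t _) _; apply: le_trans (nrm2_perp_swap_le j0) _.
  exact: ler_wpM2l.
have coord_le : nrm2 (\sum_i coord B q 0 i *: perp Bt c`_i) <= n%:R ^+ 2 * (L * D).
  by apply: nrm2_sum_scale_le => i; [apply: coord_swap_le | apply: perp_le].
have dist2_q_le : dist2 Bt q <= 4 * L * n%:R ^+ 2 * D.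
  by rewrite /dist2 perp_qE; apply: le_trans (nrm2D_le _ _) _; nra.
by exists j1; rewrite !gramseq_cons -/Bt mulrCA ler_wpM2l ?gramseq_ge0.
Qed.

End Swaps.
End LocalOptimum.

End EuclideanRows.

Section LocalSearch.
Variables (R : realType) (d : nat).
Notation pt := 'rV[R]_d.
Local Open Scope fset_scope.
Implicit Types (P C S T : {fset pt}) (k : nat).

Lemma gramdet_ge0 S : 0 <= gramdet S.
Proof. exact: gramseq_ge0. Qed.

Lemma gramdet_fset1U S x : x \notin S -> gramdet (x |` S) = gramseq (x :: enum_fset S).
Proof.
move=> xS; apply: gramseq_perm; apply: uniq_perm; rewrite /= ?xS ?fset_uniq //.
by move=> y; rewrite in_cons -in_fset1U.
Qed.

Lemma gramdet_fsetD1 S x : x \in S -> gramdet S = gramseq (x :: enum_fset (S `\ x)).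
Proof. by move=> xS; rewrite -{1}(fsetD1K xS) gramdet_fset1U ?fsetD11. Qed.

Lemma gramdet_swap C q p : q \notin C -> p \in C ->
  gramdet (swap C q p) = gramseq (q :: rem p (enum_fset C)).
Proof.
move=> qC pC; rewrite /swap gramdet_fset1U; last by rewrite in_fsetD1 negb_and qC orbT.
apply: gramseq_perm; rewrite perm_cons; apply: uniq_perm; rewrite ?rem_uniq ?fset_uniq //.
by move=> y; rewrite rem_filter ?fset_uniq // mem_filter /= -in_fsetD1.
Qed.

Definition LS_invariant k P C := C `<=` P /\ #|` C| = minn k #|` P|.

Lemma greedy_reach_inv P n C : greedy_reach P n C -> LS_invariant n P C.
Proof.
elim: n C => [C /= ->|n IHn C [C0 [/IHn[C0P C0n] step]]].
  by split; rewrite ?fsub0set ?cardfs0 ?min0n.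
case: step => [[p] | [/eqP PC0 ->]]; last first.
  have C0E : C0 = P by apply/eqP; rewrite eqEfsubset C0P -fsetD_eq0 PC0.
  by split=> //; move: C0n; rewrite C0E; lia.
rewrite in_fsetD => /andP[pC0 pP] [-> _]; split.
  by rewrite fsubUset fsub1set pP.
have C0P_lt : (#|` C0| < #|` P|)%N.
  by rewrite (ltn_leqif (fsubset_leqif_cards C0P)); apply: contraNneq pC0 => ->.
by rewrite cardfsU1 pC0 add1n; lia.
Qed.

Lemma swap_reach_inv eps k P C C' :
  swap_reach eps P C C' -> LS_invariant k P C -> LS_invariant k P C'.
Proof.
elim=> // {}C C1 C2 [q [p [qPC pC -> _]]] _ IH [CP Ck]; apply: IH.
move: qPC; rewrite in_fsetD => /andP[qC qP]; split.
  by rewrite fsubUset fsub1set qP (fsubset_trans (fsubD1set C p)).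
by rewrite cardfsU1 in_fsetD1 (negPf qC) andbF add1n -Ck (cardfsD1 p C) pC.
Qed.

Lemma LS_output_inv eps k P C : LS_output eps k P C -> LS_invariant k P C.
Proof. by case=> C0 /greedy_reach_inv C0inv [/swap_reach_inv/(_ C0inv)]. Qed.

Lemma LS_output_card eps k P C : LS_output eps k P C -> (#|` C| <= k)%N.
Proof. by case/LS_output_inv=> _ ->; apply: geq_minl. Qed.

Lemma LS_output_local_opt eps k P C q : -1 < eps -> (0 < k)%N ->
  LS_output eps k P C -> q \in P `\` C ->
  [/\ #|` C| = k, 0 < gramdet C &
      forall q' p, q' \in P `\` C -> p \in C ->
        gramdet (swap C q' p) <= ((1 + eps) ^+ 2 * gramdet C)%R].
Proof.
move=> eps_gt k_gt0 out qPC; have [_ _ [_ no_swap]] := out.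
have [CP Ck] := LS_output_inv out.
have C_card : #|` C| = k.
  have C_lt : (#|` C| < #|` P|)%N.
    rewrite (ltn_leqif (fsubset_leqif_cards CP)).
    by apply: contraTneq qPC => ->; rewrite fsetDv inE.
  by move: Ck; lia.
have [p pC] : exists p, p \in C.
  by apply/fset0Pn; rewrite -cardfs_eq0 C_card -lt0n.
have eps1 : (0 < 1 + eps)%R by rewrite -ltrBlDl sub0r.
have VOL_gt0 : 0 < VOL C.
  by rewrite -(pmulr_rgt0 _ eps1) (le_lt_trans _ (no_swap q p qPC pC)) ?sqrtr_ge0.
split=> //; first by move: VOL_gt0; rewrite sqrtr_gt0.
move=> q' p' q'PC p'C; rewrite -(sqr_sqrtr (gramdet_ge0 _)) -(sqr_sqrtr (gramdet_ge0 C)).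
by rewrite -exprMn ltW // ltrXn2r ?sqrtr_ge0 ?mulr_ge0 ?ltW ?no_swap.
Qed.

Lemma LS_output_exchange eps k P C T s : -1 < eps -> (0 < k)%N ->
  LS_output eps k P C -> #|` T| = k -> 0 < gramdet T -> s \in T -> s \in P `\` C ->
  exists2 x, x \in C & x \notin T `\ s /\
    gramdet T <= (4 * (1 + eps) ^+ 2 * k%:R ^+ 2 * gramdet (x |` (T `\ s)))%R.
Proof.
move=> eps_gt k_gt0 out Tk T_gt0 sT sPC.
have [Ck C_gt0 swap_le] := LS_output_local_opt eps_gt k_gt0 out sPC.
have sC : s \notin C by move: sPC; rewrite in_fsetD => /andP[].
set c := enum_fset C; set t := enum_fset (T `\ s).
have TE : gramdet T = gramseq (s :: t) by apply: gramdet_fsetD1.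
have t_gt0 : (0 < gramseq t)%R.
  move: T_gt0; rewrite TE gramseq_cons mulr_ge0_gt0 ?gramseq_ge0 ?dist2_ge0 //.
  by case/andP.
have tc : (size t < size c)%N.
  by change (#|` T `\ s| < #|` C|)%N; rewrite Ck -Tk (cardfsD1 s T) sT.
have c_swap_le (j : 'I_(size c)) :
    (gramseq (s :: rem c`_j c) <= (1 + eps) ^+ 2 * gramseq c)%R.
  by rewrite -gramdet_swap ?mem_nth //; apply: swap_le; rewrite ?mem_nth.
have [j] := local_opt_exchange (fset_uniq C) C_gt0 c_swap_le t_gt0 tc.
have -> : (size c)%:R = k%:R :> R by rewrite -Ck.
rewrite -TE; set x := c`_j => T_le.
have xT : x \notin T `\ s.
  apply: contraTN T_gt0 => xTs; rewrite -leNgt (le_trans T_le) //.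
  by rewrite gramseq_cons_mem ?mulr0.
by exists x; [apply: mem_nth | rewrite gramdet_fset1U].
Qed.

Lemma le_MAXDET k P S : S `<=` P -> #|` S| = k -> gramdet S <= MAXDET k P.
Proof. by move=> SP Sk; apply: le_bigmax_seq; rewrite ?fpowersetE ?Sk /=. Qed.

Lemma MAXDET_ge0 k P : 0 <= MAXDET k P.
Proof. exact: bigmax_ge_id. Qed.

Lemma MAXDET_le k P (x : R) : 0 <= x ->
  (forall S, S `<=` P -> #|` S| = k -> gramdet S <= x) -> MAXDET k P <= x.
Proof.
move=> x_ge0 Sx; rewrite /MAXDET big_seq_cond; apply: bigmax_le => // S.
by case/andP; rewrite fpowersetE => SP /eqP; apply: Sx.
Qed.

Lemma mem_bigcup_ord m (F : 'I_m -> {fset pt}) x :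
  reflect (exists i, x \in F i) (x \in \bigcup_(i <- enum 'I_m) F i).
Proof.
apply: (iffP (bigfcupP _ _ _ _)) => [[i _ xFi]|[i xFi]]; first by exists i.
by exists i; rewrite ?mem_enum.
Qed.

Section Composability.
Variables (eps : R) (k m : nat) (Ps Cs : 'I_m -> {fset pt}).
Hypotheses (eps_gt : -1 < eps) (k_gt0 : (0 < k)%N).
Hypothesis out : forall i, LS_output eps k (Ps i) (Cs i).
Notation PU := (\bigcup_(i <- enum 'I_m) Ps i).
Notation CU := (\bigcup_(i <- enum 'I_m) Cs i).
Notation K := (4 * (1 + eps) ^+ 2 * k%:R ^+ 2)%R.

Lemma gramdet_le_MAXDET_bigcup T : T `<=` PU -> #|` T| = k ->
  gramdet T <= K ^+ #|` T `\` CU| * MAXDET k CU.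
Proof.
move Tn : #|` T `\` CU| => n; elim: n T Tn => [|n IHn] T Tn TP Tk.
  by rewrite expr0 mul1r; apply: le_MAXDET; rewrite // -fsetD_eq0 -cardfs_eq0 Tn.
have K_ge0 : 0 <= K by apply: mulr_ge0; [apply: mulr_ge0|]; rewrite ?sqr_ge0.
have [T_le0|T_gt0] := leP (gramdet T) 0.
  exact: le_trans T_le0 (mulr_ge0 (exprn_ge0 _ K_ge0) (MAXDET_ge0 _ _)).
have [s sTC] : exists s, s \in T `\` CU by apply/fset0Pn; rewrite -cardfs_eq0 Tn.
move: (sTC); rewrite in_fsetD => /andP[sCU sT].
have [i sPi] : exists i, s \in Ps i by apply/mem_bigcup_ord/(fsubsetP TP).
have sPCi : s \in Ps i `\` Cs i.
  by rewrite in_fsetD sPi andbT; apply: contra sCU => sCi; apply/mem_bigcup_ord; exists i.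
have [x xC [xT T_le]] := LS_output_exchange eps_gt k_gt0 (out i) Tk T_gt0 sT sPCi.
have xCU : x \in CU by apply/mem_bigcup_ord; exists i.
apply: (le_trans T_le); rewrite (exprS K) -(mulrA K) ler_wpM2l //.
apply: IHn.
- have -> : (x |` (T `\ s)) `\` CU = (T `\` CU) `\ s.
    apply/fsetP => y; rewrite !inE; have [->|_] := eqVneq y x; first by rewrite xCU andbF.
    by rewrite andbCA.
  by move: Tn; rewrite (cardfsD1 s (T `\` CU)) sTC add1n => /succn_inj.
- have [CiPi _] := LS_output_inv (out i).
  rewrite fsubUset fsub1set (fsubset_trans (fsubD1set T s)) // andbT.
  by apply/mem_bigcup_ord; exists i; apply: (fsubsetP CiPi).
- by rewrite cardfsU1 xT add1n -Tk (cardfsD1 s T) sT.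
Qed.

End Composability.
End LocalSearch.

Unset Implicit Arguments.
Local Open Scope fset_scope.

Theorem theorem1p2 (R : realType) (eps : R) :
  0 < eps ->
  exists A : R, 0 < A /\
    forall k d : nat, (1 <= k <= d)%N ->
      (forall P C : {fset 'rV[R]_d}, LS_output eps k P C -> (#|` C| <= k)%N) /\
      (forall (m : nat) (Ps Cs : 'I_m -> {fset 'rV[R]_d}),
         (1 <= m)%N ->
         (forall i, LS_output eps k (Ps i) (Cs i)) ->
         MAXDET k (\bigcup_(i <- enum 'I_m) Cs i)
           >= MAXDET k (\bigcup_(i <- enum 'I_m) Ps i) / (A * k%:R) ^+ (2 * k)).
Proof.
move=> eps_gt0; have eps_gt : -1 < eps by apply: lt_trans eps_gt0; rewrite oppr_lt0.
exists (2 * (1 + eps)); split; first by rewrite mulr_gt0 ?addr_gt0.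
move=> k d /andP[k_gt0 _]; split=> [P C|m Ps Cs _ out]; first exact: LS_output_card.
set K := 4 * (1 + eps) ^+ 2 * k%:R ^+ 2.
have K_ge1 : 1 <= K.
  rewrite !mulr_ege1 ?exprn_ege1 ?ler1n ?lerDl ?ltW //; lra.
have -> : (2 * (1 + eps) * k%:R) ^+ (2 * k) = K ^+ k.
  by rewrite exprM /K; congr (_ ^+ _); ring.
rewrite ler_pdivrMr ?exprn_gt0 ?(lt_le_trans ltr01) // mulrC.
apply: MAXDET_le => [|S SP Sk].
  by rewrite mulr_ge0 ?exprn_ge0 ?MAXDET_ge0 ?(le_trans ler01).
apply: le_trans (gramdet_le_MAXDET_bigcup eps_gt k_gt0 out SP Sk) _.
rewrite ler_wpM2r ?MAXDET_ge0 // ler_weXn2l // -Sk.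
exact/fsubset_leq_card/fsubsetDl.
Qed.
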